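(* Let $0<c<2$ and let $r:\tilde Q\to\mathbb R$ satisfy equation (E-III) at every label $(K,L,-K-1)$ with $K\ge0$, $0\le L\le K$, and at every label $(K,L,-L-1)$ with $L\ge0$, $0\le K\le L$ (all radius sums in denominators being nonzero). If $r(n,0,-n)>0$ and $r(0,n,-n)>0$ for all integers $n\ge0$, then $r(K,L,-K)>0$ for all $0\le L\le K$ and $r(K,L,-L)>0$ for all $0\le K\le L$.
   Context: $\tilde Q=\{(K,L,M)\in\mathbb Z^3: L+M\le0,\ K+M\le0,\ K+L\ge0\}$. Equation (E-III) at a label $(K,L,M)$: setting $r_1=r(K+1,L,M)$, $r_2=r(K+1,L+1,M)$, $r_3=r(K,L+1,M)$, $r_4=r(K,L+1,M+1)$, $r_5=r(K,L,M+1)$, $r_6=r(K+1,L,M+1)$, $$(L+M+1)\frac{r_4-r_1}{r_4+r_1}+(M+K+1)\frac{r_6-r_3}{r_6+r_3}+(K+L+1)\frac{r_2-r_5}{r_2+r_5}=c-1,$$ where a term whose coefficient vanishes is omitted (so radii with vanishing coefficient need not be defined). *)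

From Stdlib Require Import Reals ZArith.
Open Scope R_scope.

(* Radius function: labels are integer triples (K,L,M). Values outside the
   region Q~ are never used by the statement. *)
Definition radius := Z -> Z -> Z -> R.

Definition inQ (K L M : Z) : Prop :=
  (L + M <= 0)%Z /\ (K + M <= 0)%Z /\ (0 <= K + L)%Z.

Definition eterm (coef : Z) (a b : R) : R :=
  if Z.eq_dec coef 0 then 0 else IZR coef * ((a - b) / (a + b)).

Definition eden (coef : Z) (a b : R) : Prop :=
  coef <> 0%Z -> a + b <> 0.

Definition EIII (c : R) (r : radius) (K L M : Z) : Prop :=
  let r1 := r (K + 1)%Z L M in
  let r2 := r (K + 1)%Z (L + 1)%Z M in
  let r3 := r K (L + 1)%Z M in
  let r4 := r K (L + 1)%Z (M + 1)%Z in
  let r5 := r K L (M + 1)%Z in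
  let r6 := r (K + 1)%Z L (M + 1)%Z in
  eden (L + M + 1) r4 r1 /\ eden (M + K + 1) r6 r3 /\ eden (K + L + 1) r2 r5 /\
  eterm (L + M + 1) r4 r1 + eterm (M + K + 1) r6 r3 + eterm (K + L + 1) r2 r5
    = c - 1.

From Stdlib Require Import Reals ZArith Lra Lia Psatz.
Open Scope R_scope.

(* At a label (K,L,-K-1) with 0 <= L <= K the middle coefficient vanishes and
   (E-III) reads (L-K) s + (K+L+1) t = c - 1, where s = (r4-r1)/(r4+r1) and
   t = (r2-r5)/(r2+r5).  For positive radii |s| < 1, so with 0 < c < 2 we get
   (K+L+1)|t| < K+L+1, i.e. |t| < 1, which together with r5 > 0 forces r2 > 0.
   Positivity therefore spreads from the row L = 0 to all of 0 <= L <= K, by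
   induction on L and, within a row, on K.  Exchanging K and L in the radius turns
   the labels (K,L,-L-1) into labels of the first kind. *)

Lemma eterm_0 (a b : R) : eterm 0 a b = 0.
Proof. unfold eterm; now destruct (Z.eq_dec 0 0). Qed.

Lemma Rabs_eterm_le (k : Z) (a b : R) :
  0 < a -> 0 < b -> Rabs (eterm k a b) <= IZR (Z.abs k).
Proof.
  intros Ha Hb; unfold eterm; rewrite abs_IZR.
  destruct (Z.eq_dec k 0) as [_|_].
  - rewrite Rabs_R0; apply Rabs_pos.
  - rewrite Rabs_mult; rewrite <- (Rmult_1_r (Rabs (IZR k))) at 2.
    apply Rmult_le_compat_l; [apply Rabs_pos|].
    unfold Rdiv; rewrite Rabs_mult, Rabs_inv, (Rabs_pos_eq (a + b)) by lra.
    apply (Rmult_le_reg_r (a + b)); [lra|].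
    rewrite Rmult_assoc, Rinv_l, Rmult_1_r, Rmult_1_l by lra.
    apply Rabs_le; lra.
Qed.

Lemma pos_of_Rabs_ratio_lt1 (a b : R) :
  0 < b -> a + b <> 0 -> Rabs ((a - b) / (a + b)) < 1 -> 0 < a.
Proof.
  intros Hb Hab Ht; apply Rabs_def2 in Ht.
  set (t := (a - b) / (a + b)) in Ht.
  assert (Hdef : t * (a + b) = a - b) by (unfold t; field; exact Hab).
  destruct (Rlt_le_dec 0 (a + b)); nra.
Qed.

Lemma pos_of_eterm_eq (n : Z) (c s a b : R) :
  0 < c -> c < 2 -> (1 <= n)%Z -> Rabs s <= IZR n - 1 ->
  0 < b -> a + b <> 0 -> s + eterm n a b = c - 1 -> 0 < a.
Proof.
  intros Hc0 Hc2 Hn Hs Hb Hab Heq.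
  apply (pos_of_Rabs_ratio_lt1 a b Hb Hab).
  unfold eterm in Heq; destruct (Z.eq_dec n 0) as [|_]; [lia|].
  assert (Hn1 : 1 <= IZR n) by (apply IZR_le; lia).
  assert (Hs' : - (IZR n - 1) <= s <= IZR n - 1) by (split_Rabs; lra).
  apply Rabs_def1; apply (Rmult_lt_reg_l (IZR n)); lra.
Qed.

Lemma EIII_swap (c : R) (r : radius) (K L M : Z) :
  EIII c r L K M -> EIII c (fun K L M => r L K M) K L M.
Proof.
  unfold EIII; cbv zeta.
  rewrite (Z.add_comm K M), (Z.add_comm M L), (Z.add_comm L K).
  intros [D1 [D2 [D3 E]]]; repeat split; auto; lra.
Qed.

Section DiagonalRows.
Variables (c : R) (r : radius).
Hypotheses (Hc0 : 0 < c) (Hc2 : c < 2).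
Hypothesis EIII_row :
  forall K L : Z, (0 <= K)%Z -> (0 <= L <= K)%Z -> EIII c r K L (- K - 1)%Z.

Lemma radius_pos_step (K L : Z) :
  (0 <= L <= K)%Z -> (L = K \/ 0 < r K (L + 1)%Z (- K)%Z) ->
  0 < r (K + 1)%Z L (- (K + 1))%Z -> 0 < r K L (- K)%Z ->
  0 < r (K + 1)%Z (L + 1)%Z (- (K + 1))%Z.
Proof.
  intros HLK Hr4 Hr1 Hr5.
  destruct (EIII_row K L ltac:(lia) HLK) as [_ [_ [Hden Heq]]]; cbv zeta in *.
  replace (- K - 1 + 1)%Z with (- K)%Z in * by ring.
  replace (- K - 1 + K + 1)%Z with 0%Z in Heq by ring.
  replace (L + (- K - 1) + 1)%Z with (L - K)%Z in Heq by ring.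
  replace (- K - 1)%Z with (- (K + 1))%Z in * by ring.
  rewrite eterm_0, Rplus_0_r in Heq.
  refine (pos_of_eterm_eq (K + L + 1) c _ _ _ Hc0 Hc2 ltac:(lia) _ Hr5 _ Heq);
    [| apply Hden; lia].
  destruct Hr4 as [->|Hr4].
  - rewrite Z.sub_diag, eterm_0, Rabs_R0, <- minus_IZR.
    apply IZR_le; lia.
  - eapply Rle_trans; [apply Rabs_eterm_le; assumption|].
    rewrite <- minus_IZR; apply IZR_le; lia.
Qed.

Lemma radius_pos_below_diagonal :
  (forall n : Z, (0 <= n)%Z -> 0 < r n 0%Z (- n)%Z) ->
  forall K L : Z, (0 <= L <= K)%Z -> 0 < r K L (- K)%Z.
Proof.
  intros Hrow0 K L [HL HLK]; revert K HLK.
  pattern L; apply natlike_ind; [| | exact HL]; clear L HL.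
  - intros K HK; apply Hrow0, HK.
  - intros L HL IHL.
    apply Z.le_ind; [intros ? ? ->; reflexivity | |].
    + apply radius_pos_step; [lia | now left | apply IHL | apply IHL]; lia.
    + intros K HK IHK; unfold Z.succ in *.
      apply radius_pos_step; [lia | right; exact IHK | apply IHL | apply IHL];
        lia.
Qed.

End DiagonalRows.

Theorem lemma4 (c : R) (r : radius) :
  0 < c -> c < 2 ->
  (forall K L : Z, (0 <= K)%Z -> (0 <= L <= K)%Z -> EIII c r K L (- K - 1)%Z) ->
  (forall K L : Z, (0 <= L)%Z -> (0 <= K <= L)%Z -> EIII c r K L (- L - 1)%Z) ->
  (forall n : Z, (0 <= n)%Z -> 0 < r n 0%Z (- n)%Z) ->
  (forall n : Z, (0 <= n)%Z -> 0 < r 0%Z n (- n)%Z) ->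
  (forall K L : Z, (0 <= L <= K)%Z -> 0 < r K L (- K)%Z) /\
  (forall K L : Z, (0 <= K <= L)%Z -> 0 < r K L (- L)%Z).
Proof.
  intros Hc0 Hc2 HrowsK HrowsL Hbase1 Hbase2; split.
  - exact (radius_pos_below_diagonal c r Hc0 Hc2 HrowsK Hbase1).
  - intros K L HKL.
    apply (radius_pos_below_diagonal c (fun K L M => r L K M) Hc0 Hc2)
      with (K := L) (L := K); [| exact Hbase2 | exact HKL].
    intros K' L' HK' HL'; apply EIII_swap, HrowsL; lia.
Qed.
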